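(* Let $\phi:\{0,1\}^N\to\{0,1\}$ be a boolean function, regarded as a multi-valued logic gate with $k=N$, $T_i=\{0,1\}$, $w(i,0)=0$, $w(i,1)=1$ for all $i$, and output set $T=\{0,1\}\subset\mathbb{R}$ (so $N(\overline{\phi})=N$). Then $\mathrm{cs}(\overline{\phi})\le s(\phi)$.
   Context: Sensitivity: for $z\in\{0,1\}^N$, let $z^i$ be obtained from $z$ by changing its $i$-th coordinate; $s(\phi,z)$ is the number of indices $i$ with $\phi(z)\ne\phi(z^i)$, and $s(\phi)=\max_z s(\phi,z)$. Standard simplex: $\Delta^{m}=\{(t_0,\dots,t_m)\in\mathbb{R}^{m+1}: t_i\ge0,\ \sum_i t_i=1\}$; for $0\le j\le m$, $\Delta^m_j=\{(t_0,\dots,\widehat{t_j},\dots,t_m):(t_0,\dots,t_m)\in\Delta^m,\ t_j\neq0\}\subseteq\mathbb{R}^m$. Multi-valued logic gate: finite sets $T_i=\{w(i,0),\dots,w(i,n_i-1)\}$ ($i=1,\dots,k$), a finite set $T\subset\mathbb{R}^m$ and $\phi:T_1\times\cdots\times T_k\to T$. Fourier series expansion: $\overline{\phi}:\Delta^{n_1-1}\times\cdots\times\Delta^{n_k-1}\to\mathbb{R}^m$, $\overline{\phi}((t_{1,j})_j,\dots,(t_{k,j})_j)=\sum_{(j_1,\dots,j_k)}\big(\prod_{s=1}^k t_{s,j_s}\big)\phi(w(1,j_1),\dots,w(k,j_k))$. $N(\overline{\phi})=n_1+\cdots+n_k-k$. For $z=(w(1,j(z,1)),\dots,w(k,j(z,k)))$: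 $C(\overline{\phi},z)=\prod_{i=1}^k\Delta^{n_i-1}_{j(z,i)}\subseteq\mathbb{R}^{N(\overline\phi)}$, and $f_z:\mathbb{R}^{N(\overline\phi)}\to\mathbb{R}^m$ is the polynomial map in the variables $t_{i,j}$ ($j\ne j(z,i)$, ordered lexicographically) obtained from the multilinear formula for $\overline{\phi}$ by substituting $t_{i,j(z,i)}=1-\sum_{j\neq j(z,i)}t_{i,j}$. Signs: for $g:\mathbb{R}^n\to\mathbb{R}$ and nonempty $C$, $\mathrm{sign}_C(g)=+1,0,-1$ if $g>0$, $g=0$, $g<0$ on all of $C$ respectively, and $u$ (formal symbol) otherwise; $\mathrm{Sign}_C(g)=(\mathrm{sign}_C(\partial g/\partial x_1),\dots,\mathrm{sign}_C(\partial g/\partial x_n))$. $S_n$: nonzero tuples in $\{-1,0,1\}^n$ with first nonzero entry $1$. $t\in\{1,0,-1,u\}^n$ eliminates $s\in S_n$ if (i) $t_i\neq0\neq s_i$ for some $i$; (ii) there is $k\in\{\pm1\}$ with $t_i=ks_i$ whenever $s_i\ne0$, $t_i\ne0$; (iii) $s_i=0$ whenever $t_i=u$. $\mathrm{Elim}(X)$ = set of elements of $S_n$ eliminated by some element of $X$. $\mathrm{Sens}_C(f)$ = set of $v\in S_n$ eliminated by $\mathrm{Sign}_C(\pi\circ f)$ for some differentiable $\pi:\mathbb{R}^m\to\mathbb{R}$. Continuous sensitivity: with $N'=N(\overline\phi)$, $\mathrm{cs}(\overline{\phi},z)=\log_3\big(3^{N'}-2|\mathrm{Elim}(S_{N'}\setminus\mathrm{Sens}_{C(\overline{\phi},z)}(f_z))|\big)$,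 $\mathrm{cs}(\overline{\phi})=\max_z\mathrm{cs}(\overline{\phi},z)$. *)

From Stdlib Require Import Reals Classical ClassicalEpsilon.
From HB Require Import structures.
From mathcomp Require Import all_boot.

Set Implicit Arguments.
Unset Strict Implicit.
Unset Printing Implicit Defensive.

Definition bpt (N : nat) := {ffun 'I_N -> bool}.

Definition flip (N : nat) (z : bpt N) (i : 'I_N) : bpt N :=
  [ffun j => if j == i then ~~ z j else z j].

Definition sens_at (N : nat) (phi : bpt N -> bool) (z : bpt N) : nat :=
  #|[set i : 'I_N | phi z != phi (flip z i)]|.

Definition sensitivity (N : nat) (phi : bpt N -> bool) : nat :=
  \max_(z : bpt N) sens_at phi z.

(* A point of Delta^1 x ... x Delta^1 is t : 'I_N -> bool -> R, with    *)
(* t i false = t_{i,0} and t i true = t_{i,1}.                          *)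

Local Open Scope R_scope.

Definition out (b : bool) : R := if b then 1 else 0.

Definition fourier (N : nat) (phi : bpt N -> bool) (t : 'I_N -> bool -> R) : R :=
  \big[Rplus/0]_(y : bpt N) (\big[Rmult/1]_(i < N) t i (y i) * out (phi y)).

Definition simplex1 (t : bool -> R) : Prop :=
  (0 <= t false) /\ (0 <= t true) /\ (t false + t true = 1).

Definition Delta1_j (j : bool) (s : R) : Prop :=
  exists t : bool -> R, simplex1 t /\ t j <> 0 /\ s = t (~~ j).

(* Points of R^{N(phibar)} = R^N: the remaining variable for block i is
   t_{i, 1 - z_i}, so coordinate i of x stands for t_{i, ~~ z i}. *)
Definition rpt (N : nat) := 'I_N -> R.

Definition Cz (N : nat) (z : bpt N) (x : rpt N) : Prop :=
  forall i : 'I_N, Delta1_j (z i) (x i).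

Definition f_z (N : nat) (phi : bpt N -> bool) (z : bpt N) (x : rpt N) : R :=
  fourier phi (fun i j => if j == z i then (1 - x i) else x i).

Inductive sgn := SPos | SZero | SNeg | SU.
Inductive tern := TPos | TZero | TNeg.

Definition sgn_code (s : sgn) : 'I_4 :=
  match s with SPos => inord 0 | SZero => inord 1 | SNeg => inord 2 | SU => inord 3 end.
Definition sgn_decode (n : 'I_4) : sgn :=
  match val n with 0 => SPos | 1 => SZero | 2 => SNeg | _ => SU end.
Lemma sgn_codeK : cancel sgn_code sgn_decode.
Proof. by case; rewrite /sgn_decode /= inordK. Qed.
HB.instance Definition _ := Finite.copy sgn (can_type sgn_codeK).

Definition tern_code (s : tern) : 'I_3 :=
  match s with TPos => inord 0 | TZero => inord 1 | TNeg => inord 2 end.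
Definition tern_decode (n : 'I_3) : tern :=
  match val n with 0 => TPos | 1 => TZero | _ => TNeg end.
Lemma tern_codeK : cancel tern_code tern_decode.
Proof. by case; rewrite /tern_decode /= inordK. Qed.
HB.instance Definition _ := Finite.copy tern (can_type tern_codeK).

Definition tern_sgn (a : tern) : sgn :=
  match a with TPos => SPos | TZero => SZero | TNeg => SNeg end.
Definition tern_neg (a : tern) : tern :=
  match a with TPos => TNeg | TZero => TZero | TNeg => TPos end.

Definition tvec (N : nat) := {ffun 'I_N -> tern}.

Definition S_n (N : nat) : {set tvec N} :=
  [set s : tvec N | [exists i, s i != TZero] &&
     [forall i, ((s i != TZero) && [forall j : 'I_N, (j < i)%N ==> (s j == TZero)])
                  ==> (s i == TPos)]].

Definition eliminates (N : nat) (t : 'I_N -> sgn) (s : tvec N) : bool :=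
  [&& [exists i, (t i != SZero) && (s i != TZero)],
      [forall i, ((s i != TZero) && (t i != SZero)) ==> (t i == tern_sgn (s i))]
   || [forall i, ((s i != TZero) && (t i != SZero)) ==> (t i == tern_sgn (tern_neg (s i)))]
    & [forall i, (t i == SU) ==> (s i == TZero)]].

Definition Elim (N : nat) (X : {set tvec N}) : {set tvec N} :=
  [set s in S_n N | [exists x in X, eliminates (fun i => tern_sgn (x i)) s]].

Definition upd (N : nat) (x : rpt N) (i : 'I_N) (r : R) : rpt N :=
  fun j => if j == i then r else x j.

Definition pderiv_is (N : nat) (g : rpt N -> R) (i : 'I_N) (x : rpt N) (l : R) : Prop :=
  derivable_pt_lim (fun r => g (upd x i r)) (x i) l.

Definition pos_on (N : nat) (C : rpt N -> Prop) (g : rpt N -> R) (i : 'I_N) : Prop :=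
  forall x, C x -> exists l, pderiv_is g i x l /\ (0 < l).
Definition zero_on (N : nat) (C : rpt N -> Prop) (g : rpt N -> R) (i : 'I_N) : Prop :=
  forall x, C x -> exists l, pderiv_is g i x l /\ l = 0.
Definition neg_on (N : nat) (C : rpt N -> Prop) (g : rpt N -> R) (i : 'I_N) : Prop :=
  forall x, C x -> exists l, pderiv_is g i x l /\ (l < 0).

Definition sign_C (N : nat) (C : rpt N -> Prop) (g : rpt N -> R) (i : 'I_N) : sgn :=
  if excluded_middle_informative (pos_on C g i) then SPos
  else if excluded_middle_informative (zero_on C g i) then SZero
  else if excluded_middle_informative (neg_on C g i) then SNeg
  else SU.

Definition Sign_C (N : nat) (C : rpt N -> Prop) (g : rpt N -> R) : 'I_N -> sgn :=
  fun i => sign_C C g i.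

Definition bool_of_Prop (P : Prop) : bool :=
  if excluded_middle_informative P then true else false.

Definition Sens_C (N : nat) (C : rpt N -> Prop) (f : rpt N -> R) : {set tvec N} :=
  [set v in S_n N | bool_of_Prop
     (exists pi : R -> R, (forall r : R, exists l : R, derivable_pt_lim pi r l) /\
        eliminates (Sign_C C (fun x => pi (f x))) v)].

Definition log3 (x : R) : R := (ln x / ln 3).

Definition cs_at (N : nat) (phi : bpt N -> bool) (z : bpt N) : R :=
  log3 (3 ^ N - 2 * INR #|Elim (S_n N :\: Sens_C (Cz z) (f_z phi z))|).

(* cs(phibar) = max_z cs(phibar, z)  (the max over the nonempty set {0,1}^N) *)
Definition cs (N : nat) (phi : bpt N -> bool) : R :=
  \big[Rmax/cs_at phi [ffun => false]]_(z : bpt N) cs_at phi z.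

(* Fix z and call a coordinate j insensitive when phi z = phi z^j.  On the
   j-th axis through the origin of C(phibar, z) the map f_z is constant, so
   for every pi the j-th partial derivative of pi o f_z vanishes at the
   origin and its sign on C(phibar, z) is neither +1 nor -1.  Hence the unit
   vector e_j is not in Sens, and it eliminates every v in S_N with v_j <> 0.
   So every vector of {-1,0,1}^N that is nonzero at an insensitive coordinate
   lies, up to sign, in Elim(S_N \ Sens), whence
   3^N <= 3^s(phi,z) + 2 |Elim(S_N \ Sens)|, i.e. cs(phibar, z) <= s(phi, z). *)

From Stdlib Require Import Reals Lra FunctionalExtensionality ClassicalEpsilon.
From HB Require Import structures.
From mathcomp Require Import all_boot.

Set Implicit Arguments.
Unset Strict Implicit.
Unset Printing Implicit Defensive.

Lemma card_tern : #|{: tern}| = 3.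
Proof.
rewrite -[3]card_ord; apply: (bij_eq_card (f := tern_code)).
exists tern_decode; first exact: tern_codeK.
by case=> [[|[|[|?]]] ?] //; apply: val_inj; rewrite /= inordK.
Qed.

Lemma bool_of_PropP (P : Prop) : reflect P (bool_of_Prop P).
Proof. by rewrite /bool_of_Prop; case: excluded_middle_informative => ?; constructor. Qed.

Lemma TPos_neq0 : TPos != TZero. Proof. by apply/eqP. Qed.
Lemma TNeg_neq0 : TNeg != TZero. Proof. by apply/eqP. Qed.

Lemma SPos_neq0 : SPos != SZero. Proof. by apply/eqP. Qed.

Lemma tern_neg_neq0 (a : tern) : (tern_neg a != TZero) = (a != TZero).
Proof. by case: a; rewrite /= ?eqxx ?TPos_neq0 ?TNeg_neq0. Qed.

Definition tvec_opp (N : nat) (v : tvec N) : tvec N := [ffun i => tern_neg (v i)].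

Definition tvec_unit (N : nat) (j : 'I_N) : tvec N :=
  [ffun i => if i == j then TPos else TZero].

Lemma tvec_oppK (N : nat) : involutive (@tvec_opp N).
Proof. by move=> v; apply/ffunP => i; rewrite !ffunE; case: (v i). Qed.

Lemma card_tvec_supported (N : nat) (A : {set 'I_N}) :
  #|[set v : tvec N | [forall j, (j \notin A) ==> (v j == TZero)]]| <= 3 ^ #|A|.
Proof.
pose res (v : tvec N) : {ffun {x | x \in A} -> tern} := [ffun x => v (val x)].
rewrite -card_tern -(card_sig (mem A)) -card_ffun; apply: (@leq_card_in _ _ res) => v w.
rewrite !inE => /forallP v_supp /forallP w_supp /ffunP res_vw.
apply/ffunP => i; have [iA | iNA] := boolP (i \in A).
  by have := res_vw (exist _ i iA); rewrite !ffunE.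
by move: (v_supp i) (w_supp i); rewrite iNA => /eqP -> /eqP ->.
Qed.

Lemma tvec_unit_in_S_n (N : nat) (j : 'I_N) : tvec_unit j \in S_n N.
Proof.
rewrite inE; apply/andP; split; first by apply/existsP; exists j; rewrite ffunE eqxx TPos_neq0.
apply/forallP => i; apply/implyP; rewrite ffunE.
by case: (eqVneq i j) => [->|ij]; rewrite ?(negbTE ij) eqxx // => /andP[].
Qed.

Lemma S_n_or_opp (N : nat) (v : tvec N) (i0 : 'I_N) :
  v i0 != TZero -> v \in S_n N \/ tvec_opp v \in S_n N.
Proof.
move=> vi0.
case: (@arg_minnP _ i0 (fun i => v i != TZero) (fun i : 'I_N => val i) vi0) => m vm m_min.
have first_nz (i : 'I_N) : v i != TZero ->
    [forall j : 'I_N, (j < i)%N ==> (v j == TZero)] -> i = m.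
  move=> vi /forallP below_i; apply: val_inj; case: (ltngtP m i) => // [m_lt_i | i_lt_m].
    by move: (below_i m); rewrite m_lt_i (negbTE vm).
  by move: (m_min i vi); rewrite leqNgt i_lt_m.
have below_opp (i : 'I_N) :
    [forall j : 'I_N, (j < i)%N ==> (tvec_opp v j == TZero)] ->
    [forall j : 'I_N, (j < i)%N ==> (v j == TZero)].
  move=> /forallP below_i; apply/forallP => k; apply/implyP => k_lt_i.
  move: (below_i k); rewrite k_lt_i ffunE /= => opp_k0.
  by apply/negPn; rewrite -tern_neg_neq0 opp_k0.
move: vm; case vmE: (v m); rewrite ?eqxx // => _; [left | right]; rewrite inE.
- apply/andP; split; first by apply/existsP; exists m; rewrite vmE TPos_neq0.
  by apply/forallP => i; apply/implyP => /andP[vi /(first_nz i vi) ->]; rewrite vmE.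
- apply/andP; split; first by apply/existsP; exists m; rewrite ffunE vmE TPos_neq0.
  apply/forallP => i; apply/implyP; rewrite ffunE tern_neg_neq0.
  by case/andP=> vi /below_opp/(first_nz i vi) ->; rewrite vmE.
Qed.

Lemma eliminates_unit (N : nat) (j : 'I_N) (w : tvec N) :
  w j != TZero -> eliminates (fun i => tern_sgn (tvec_unit j i)) w.
Proof.
move=> wj; apply/and3P; split.
- by apply/existsP; exists j; rewrite ffunE eqxx wj /= SPos_neq0.
- move: wj; case wjE: (w j); rewrite ?eqxx // => _; apply/orP; [left | right];
  by apply/forallP => i; rewrite ffunE; case: (eqVneq i j) => [->|ij];
    rewrite ?wjE ?(negbTE ij) /= eqxx /= ?andbF ?implybT.
- by apply/forallP => i; rewrite ffunE; case: (i == j); apply/implyP => /eqP.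
Qed.

Lemma flip_neq (N : nat) (z : bpt N) (j : 'I_N) : flip z j != z.
Proof. by apply/eqP => /ffunP /(_ j); rewrite ffunE eqxx; case: (z j). Qed.

Lemma neq_flip_off (N : nat) (y z : bpt N) (j : 'I_N) :
  y != z -> y != flip z j -> exists2 i, i != j & y i != z i.
Proof.
have neq_ffun (f g : bpt N) : f != g -> exists k, f k != g k.
  move=> fg; apply/existsP; move: fg; apply: contraR; rewrite negb_exists => /forallP eq_fg.
  by apply/eqP/ffunP => k; apply/eqP/negPn.
move=> /neq_ffun[i yz_i] /neq_ffun[k]; rewrite ffunE.
case: (eqVneq k j) => [-> | kj yk]; last by exists k.
case: (eqVneq i j) yz_i => [-> | ij yz_i _]; last by exists i.
by case: (y j); case: (z j).
Qed.

HB.instance Definition _ := Monoid.isComLaw.Build R (IZR 0) Rplus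
  (fun a b c => esym (Rplus_assoc a b c)) Rplus_comm Rplus_0_l.
HB.instance Definition _ := Monoid.isComLaw.Build R (IZR 1) Rmult
  (fun a b c => esym (Rmult_assoc a b c)) Rmult_comm Rmult_1_l.

Local Open Scope R_scope.

Lemma INR_expn (m n : nat) : INR (m ^ n)%N = INR m ^ n.
Proof. by elim: n => [|n IHn] //; rewrite expnS mult_INR IHn. Qed.

(* [ln] is [0] on nonpositive arguments, which makes the bound hold there too. *)
Lemma log3_le_pow (x : R) (a : nat) : x <= 3 ^ a -> log3 x <= INR a.
Proof.
move=> x_le; have ln3_gt0 : 0 < ln 3 by rewrite -ln_1; apply: ln_increasing; lra.
have ln_x_le : ln x <= INR a * ln 3.
  have [x_gt0 | x_le0] := Rlt_le_dec 0 x.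
    rewrite -ln_pow; last lra.
    by case: (Rle_lt_or_eq_dec _ _ x_le) => [/ln_increasing lt | ->]; [left; apply: lt | right].
  have -> : ln x = 0 by rewrite /ln; case: Rlt_dec => // x_pos; exfalso; lra.
  by apply: Rmult_le_pos; [exact: pos_INR | lra].
apply: (Rmult_le_reg_r (ln 3)) => //.
by rewrite /log3 /Rdiv Rmult_assoc Rinv_l; lra.
Qed.

Section InsensitiveCoordinate.
Variables (N : nat) (phi : bpt N -> bool) (z : bpt N) (j : 'I_N).
Hypothesis insensitive : phi z = phi (flip z j).

Let axis (r : R) : rpt N := upd (fun _ => 0) j r.

(* On the axis only the terms y = z and y = z^j of the multilinear sum survive,
   with weights 1 - r and r. *)
Lemma f_z_axis (r : R) : f_z phi z (axis r) = out (phi z).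
Proof.
set t := fun i b => if b == z i then 1 - axis r i else axis r i.
have weight_z : \big[Rmult/1]_(i < N) t i (z i) = 1 - r.
  rewrite (bigD1 j) //= big1 => [|i ij]; rewrite /t /axis /upd ?(negbTE ij) !eqxx; ring.
have weight_flip : \big[Rmult/1]_(i < N) t i (flip z j i) = r.
  rewrite (bigD1 j) //= big1 => [|i ij]; rewrite /t /axis /upd ffunE ?(negbTE ij) !eqxx.
    by case: (z j) => /=; ring.
  ring.
have weight_other : \big[Rplus/0]_(y | (y != z) && (y != flip z j))
    (\big[Rmult/1]_(i < N) t i (y i) * out (phi y)) = 0.
  apply: big1 => y /andP[/neq_flip_off yz /yz[i ij yz_i]].
  by rewrite (bigD1 i) //= /t (negbTE yz_i) /axis /upd (negbTE ij); ring.
rewrite /f_z /fourier -/t (bigD1 z) //= (bigD1 (flip z j)) /= ?flip_neq //.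
by rewrite weight_z weight_flip weight_other -insensitive; ring.
Qed.

Lemma Cz_origin : Cz z (fun _ => 0).
Proof.
move=> i; exists (fun b => if b == z i then 1 else 0).
by rewrite /simplex1 eqxx; case: (z i) => /=; split; lra.
Qed.

Lemma pderiv_origin_eq0 (pi : R -> R) (l : R) :
  pderiv_is (fun x => pi (f_z phi z x)) j (fun _ => 0) l -> l = 0.
Proof.
have const_on_axis : (fun r => pi (f_z phi z (axis r))) = fun _ => pi (out (phi z)).
  by apply: functional_extensionality => r; rewrite f_z_axis.
have := derivable_pt_lim_const (pi (out (phi z))) 0; rewrite /fct_cte -const_on_axis.
by move=> lim_0 lim_l; apply: esym; apply: uniqueness_limite lim_0 lim_l.
Qed.

Lemma sign_C_insensitive (pi : R -> R) :
  let s := sign_C (Cz z) (fun x => pi (f_z phi z x)) j in s <> SPos /\ s <> SNeg.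
Proof.
have no_sign (C : R -> Prop) : ~ C 0 ->
    ~ (forall x, Cz z x -> exists l, pderiv_is (fun x => pi (f_z phi z x)) j x l /\ C l).
  by move=> notC0 /(_ _ Cz_origin)[l [/pderiv_origin_eq0 -> /notC0]].
have not_pos := no_sign (Rlt 0) (Rlt_irrefl 0).
have not_neg := no_sign (Rgt 0) (Rlt_irrefl 0).
rewrite /= /sign_C.
destruct excluded_middle_informative as [pos | ?]; first by case: (not_pos pos).
destruct excluded_middle_informative; first by [].
by destruct excluded_middle_informative as [neg | ?]; first case: (not_neg neg).
Qed.

Lemma tvec_unit_notin_Sens : tvec_unit j \notin Sens_C (Cz z) (f_z phi z).
Proof.
rewrite inE negb_and; apply/orP; right; apply/negP => /bool_of_PropP[pi [_ elim_j]].
have [not_pos not_neg] := sign_C_insensitive pi.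
case/and3P: elim_j => /existsP[i /andP[sign_i unit_i]] _ /forallP no_u.
move: unit_i; rewrite ffunE; case: (eqVneq i j) sign_i => [-> sign_j _ | _ _]; last by rewrite eqxx.
move: (no_u j) sign_j not_pos not_neg; rewrite ffunE eqxx /Sign_C.
by case: sign_C; rewrite ?eqxx ?(negbTE TPos_neq0).
Qed.

Lemma in_Elim_insensitive (w : tvec N) :
  w \in S_n N -> w j != TZero -> w \in Elim (S_n N :\: Sens_C (Cz z) (f_z phi z)).
Proof.
move=> wS wj; rewrite inE wS; apply/existsP; exists (tvec_unit j).
by rewrite in_setD tvec_unit_notin_Sens tvec_unit_in_S_n eliminates_unit.
Qed.

End InsensitiveCoordinate.

Lemma card_Elim_lower (N : nat) (phi : bpt N -> bool) (z : bpt N) :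
  (3 ^ N <= 3 ^ sens_at phi z + 2 * #|Elim (S_n N :\: Sens_C (Cz z) (f_z phi z))|)%N.
Proof.
set A := [set i | phi z != phi (flip z i)]; set E := Elim _.
set G := [set v : tvec N | [forall j, (j \notin A) ==> (v j == TZero)]].
have outside_G : ~: G \subset E :|: [set tvec_opp v | v in E].
  apply/subsetP => v; rewrite in_setC in_set negb_forall in_setU => /existsP[j].
  rewrite negb_imply inE negbK => /andP[/eqP insens vj]; apply/orP.
  case: (S_n_or_opp vj) => [vS | opp_vS]; first by left; apply: (in_Elim_insensitive insens).
  right; apply/imsetP; exists (tvec_opp v); last by rewrite tvec_oppK.
  by apply: (in_Elim_insensitive insens); rewrite // ffunE tern_neg_neq0.
have card_outside_G : (#|~: G| <= 2 * #|E|)%N.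
  apply: leq_trans (subset_leq_card outside_G) _; apply: leq_trans (leq_card_setU _ _) _.
  by rewrite mul2n -addnn leq_add2l leq_imset_card.
have card_tvec : #|{: tvec N}| = (3 ^ N)%N by rewrite card_ffun card_tern card_ord.
rewrite -card_tvec -(cardsC G).
exact: leq_add (card_tvec_supported A) card_outside_G.
Qed.

Lemma cs_at_le_sens_at (N : nat) (phi : bpt N -> bool) (z : bpt N) :
  cs_at phi z <= INR (sens_at phi z).
Proof.
apply: log3_le_pow; move/leP/le_INR: (card_Elim_lower phi z).
rewrite plus_INR mult_INR !INR_expn !(INR_IZR_INZ 3) (INR_IZR_INZ 2) /=; lra.
Qed.

Theorem mainTheorem9 (N : nat) (phi : {ffun 'I_N -> bool} -> bool) :
  cs phi <= INR (sensitivity phi).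
Proof.
have cs_at_le z : cs_at phi z <= INR (sensitivity phi).
  apply: Rle_trans (cs_at_le_sens_at phi z) (le_INR _ _ (elimT leP _)).
  exact: (@leq_bigmax _ (fun z => sens_at phi z) z).
by apply: (big_ind (fun x => x <= INR (sensitivity phi))) => // x y; apply: Rmax_lub.
Qed.
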